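(* Let $X$ be a finite semi-permutation all of whose points have $x$-coordinates in $\{0,1,\dots,N-1\}$, let $0\le s<N$ be an integer, and let $X^s=\{((p.x+s)\bmod N,\;p.y): p\in X\}$ be the cyclic shift of $X$ by $s$ units to the right. Then $\mathrm{opt}(X^s)\ge \mathrm{opt}(X)-|X|$.
   Context: Points have integer coordinates. Two points $p,q$ are collinear if $p.x=q.x$ or $p.y=q.y$; otherwise $\square_{p,q}$ is the smallest closed axis-parallel rectangle containing both. A non-collinear pair $(p,q)$ is satisfied in $S$ if some $r\in S\setminus\{p,q\}$ lies in $\square_{p,q}$; $S$ is satisfied if all its non-collinear pairs are satisfied. $X$ is a semi-permutation if every horizontal line containing a point of $X$ contains exactly one. $\mathrm{opt}(X)$ is the minimum $|Y|$ over point sets $Y$ such that $X\cup Y$ is satisfied. *)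

From HB Require Import structures.
From mathcomp Require Import all_boot all_order all_algebra.
From mathcomp Require Import finmap.
Set Implicit Arguments. Unset Strict Implicit. Unset Printing Implicit Defensive.
Import Order.TTheory GRing.Theory Num.Theory.
Local Open Scope ring_scope.
Local Open Scope fset_scope.

Definition point := (int * int)%type.
Definition px (p : point) : int := p.1.
Definition py (p : point) : int := p.2.

Definition collinear (p q : point) : bool := (px p == px q) || (py p == py q).

Definition in_box (p q r : point) : bool :=
  (Num.min (px p) (px q) <= px r <= Num.max (px p) (px q)) &&
  (Num.min (py p) (py q) <= py r <= Num.max (py p) (py q)).

Definition pair_satisfied (S : {fset point}) (p q : point) : Prop :=
  exists r, [/\ r \in S, r != p, r != q & in_box p q r].

Definition satisfied (S : {fset point}) : Prop :=
  forall p q, p \in S -> q \in S -> ~~ collinear p q -> pair_satisfied S p q.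

Definition semi_permutation (X : {fset point}) : Prop :=
  forall p q, p \in X -> q \in X -> py p = py q -> p = q.

Definition is_opt (X : {fset point}) (k : nat) : Prop :=
  (exists Y : {fset point}, satisfied (X `|` Y) /\ #|` Y| = k) /\
  (forall Y : {fset point}, satisfied (X `|` Y) -> (k <= #|` Y|)%N).

Definition shift_pt (N s : nat) (p : point) : point :=
  (((px p + s%:Z) %% N%:Z)%Z, py p).

Definition cyc_shift (N s : nat) (X : {fset point}) : {fset point} :=
  [fset shift_pt N s p | p in X].

(* Let Y be optimal for the shifted set, so that W = X^s `|` Y is satisfied.  Mapping
   both coordinates by nondecreasing maps keeps a set satisfied: a witness whose image
   collides with an endpoint is traded for a strictly closer pair.  Hence W may be
   clamped to the columns 0..N-1 and every row rounded down to a row of X.  Now cut the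
   grid at column s and swap the two parts, leaving one empty column between them, and
   fill that column with one point in each row of X: a pair straddling the cut is
   satisfied by the column point in the row of either endpoint.  Merging the column
   into its right neighbour turns the column map into x |-> (x - s) mod N, so X is
   recovered: we get a satisfied superset Z of X with |Z| <= |W| + |X|, whence
   opt(X) <= |Z| - |X| <= |W| <= |X| + opt(X^s). *)

From HB Require Import structures.
From mathcomp Require Import all_boot all_order all_algebra.
From mathcomp Require Import finmap zify.
Import Order.TTheory GRing.Theory Num.Theory.
Local Open Scope fset_scope.
Local Open Scope ring_scope.

Definition map_point (f g : int -> int) (p : point) : point := (f (px p), g (py p)).

Definition map_points (f g : int -> int) (S : {fset point}) : {fset point} :=
  [fset map_point f g p | p in S].

Lemma card_map_points f g S : (#|` map_points f g S| <= #|` S|)%N.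
Proof. exact: leq_imfset_card. Qed.

Lemma collinearC p q : collinear p q = collinear q p.
Proof. by rewrite /collinear eq_sym [py p == _]eq_sym. Qed.

Lemma in_boxC p q r : in_box p q r = in_box q p r.
Proof. by rewrite /in_box minC maxC [Num.min (py p) _]minC [Num.max (py p) _]maxC. Qed.

Lemma pair_satisfiedC S p q : pair_satisfied S p q -> pair_satisfied S q p.
Proof. by case=> r [rS rp rq r_box]; exists r; split; rewrite // in_boxC. Qed.

Lemma in_box_l p q : in_box p q p.
Proof. by rewrite /in_box; apply/andP; split; apply/andP; split; lia. Qed.

Lemma in_box_r p q : in_box p q q.
Proof. by rewrite in_boxC in_box_l. Qed.

Definition l1_dist (p q : point) : nat :=
  (absz (px q - px p) + absz (py q - py p))%N.

Lemma in_box_l1_ltl {p q r : point} :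
  in_box p q r -> r != p -> (l1_dist r q < l1_dist p q)%N.
Proof.
case: p q r => [p1 p2] [q1 q2] [r1 r2].
rewrite /in_box /l1_dist /px /py /= xpair_eqE.
by move=> /andP[/andP[? ?] /andP[? ?]] /nandP[/eqP ?|/eqP ?]; lia.
Qed.

Lemma in_box_l1_ltr {p q r : point} :
  in_box p q r -> r != q -> (l1_dist p r < l1_dist p q)%N.
Proof.
case: p q r => [p1 p2] [q1 q2] [r1 r2].
rewrite /in_box /l1_dist /px /py /= xpair_eqE.
by move=> /andP[/andP[? ?] /andP[? ?]] /nandP[/eqP ?|/eqP ?]; lia.
Qed.

Lemma homo_between {f : int -> int} {a b r : int} : {homo f : x y / x <= y} ->
  Num.min a b <= r <= Num.max a b -> Num.min (f a) (f b) <= f r <= Num.max (f a) (f b).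
Proof.
move=> f_homo /andP[? ?].
have [ab|ba] := lerP a b.
  by have := f_homo a r; have := f_homo r b; lia.
by have := f_homo b r; have := f_homo r a; lia.
Qed.

Lemma in_box_map f g p q r : {homo f : x y / x <= y} -> {homo g : x y / x <= y} ->
  in_box p q r -> in_box (map_point f g p) (map_point f g q) (map_point f g r).
Proof.
move=> f_homo g_homo /andP[/(homo_between f_homo) hx /(homo_between g_homo) hy].
exact/andP.
Qed.

Lemma collinear_map f g p q :
  collinear p q -> collinear (map_point f g p) (map_point f g q).
Proof. by case/orP=> /eqP e; rewrite /collinear /px /py /= e eqxx ?orbT. Qed.

Lemma satisfied_map f g S : {homo f : x y / x <= y} -> {homo g : x y / x <= y} ->
  satisfied S -> satisfied (map_points f g S).
Proof.
move=> f_homo g_homo satS _ _ /imfsetP[a0 a0S ->] /imfsetP[b0 b0S ->].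
set F := map_point f g.
suff : forall n a b, a \in S -> b \in S -> (l1_dist a b < n)%N ->
    ~~ collinear (F a) (F b) -> pair_satisfied (map_points f g S) (F a) (F b).
  by move/(_ _ a0 b0 a0S b0S (ltnSn _)).
elim=> // n IH a b aS bS ab_n ncol.
have [r [rS ra rb r_box]] := satS a b aS bS (contra (@collinear_map f g a b) ncol).
have [Fra|Fra] := eqVneq (F r) (F a).
  rewrite -Fra; apply: IH rS bS _ _; last by rewrite Fra.
  by have := in_box_l1_ltl r_box ra; lia.
have [Frb|Frb] := eqVneq (F r) (F b).
  rewrite -Frb; apply: IH aS rS _ _; last by rewrite Frb.
  by have := in_box_l1_ltr r_box rb; lia.
exists (F r); split => //; first exact: in_imfset.
exact: in_box_map.
Qed.

Lemma exists_monotone_retraction (R : {fset int}) : R != fset0 ->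
  exists g : int -> int,
    [/\ {homo g : x y / x <= y}, {in R, forall r, g r = r} & forall x, g x \in R].
Proof.
case/fset0Pn=> r0 r0R.
pose m := \big[Num.min/r0]_(r <- R) r.
have m_min r : r \in R -> m <= r by move=> rR; exact: ge_bigmin_seq.
have R_max x y : x \in R -> y \in R -> Num.max x y \in R by rewrite maxEle; case: ifP.
have R_min x y : x \in R -> y \in R -> Num.min x y \in R by rewrite minEle; case: ifP.
have mR : m \in R by rewrite /m big_seq; elim/big_ind: _.
exists (fun x => \big[Num.max/m]_(r <- R | r <= x) r); split.
- move=> x y xy; apply: sub_bigmax => r rx; exact: le_trans xy.
- move=> r rR; apply: le_anti; rewrite bigmax_le ?m_min //=.
  exact: le_bigmax_seq.
- by move=> x; rewrite big_seq_cond; elim/big_ind: _ => // r /andP[].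
Qed.

Definition column (c : int) (R : {fset int}) : {fset point} :=
  [fset (c, y) | y in R].

Lemma card_column c R : (#|` column c R| <= #|` R|)%N.
Proof. exact: leq_imfset_card. Qed.

Definition piecewise (s : int) (lo hi : int -> int) (x : int) : int :=
  if s <= x then hi x else lo x.

Section Splice.

Variables (S : {fset point}) (R : {fset int}) (s c : int) (lo hi : int -> int).
Hypothesis satS : satisfied S.
Hypothesis rows_S : {in S, forall p, py p \in R}.
Hypothesis lo_mono : {mono lo : x y / x <= y}.
Hypothesis hi_mono : {mono hi : x y / x <= y}.
Hypothesis sides :
  {in S, forall p, if s <= px p then hi (px p) < c else c < lo (px p)}.

Let F := map_point (piecewise s lo hi) id.
Let T := map_points (piecewise s lo hi) id S `|` column c R.

Lemma splice_column_witness a q : a \in S -> py q != py a ->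
    Num.min (px (F a)) (px q) <= c <= Num.max (px (F a)) (px q) ->
  pair_satisfied T (F a) q.
Proof.
move=> aS qa c_between; exists (c, py a); split.
- by rewrite inE; apply/orP; right; apply/imfsetP; exists (py a); rewrite ?rows_S.
- have := sides a aS; rewrite /F /map_point /piecewise.
  by case: ifP => _ ?; apply/eqP => -[]; lia.
- by apply: contraNneq qa => <-.
- by rewrite /in_box c_between /=; apply/andP; split; lia.
Qed.

Lemma splice_same_side a b : a \in S -> b \in S -> (s <= px a) = (s <= px b) ->
  ~~ collinear (F a) (F b) -> pair_satisfied T (F a) (F b).
Proof.
move=> aS bS same_side ncol.
have [h [h_mono Fh]] : exists h, {mono h : x y / x <= y} /\
    forall p, in_box a b p -> F p = map_point h id p.
  rewrite /F /map_point /piecewise.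
  case: (lerP s (px a)) same_side => sa /esym sb; [exists hi | exists lo];
    by split => // p /andP[/andP[? ?] _]; case: ifP => // ?; exfalso; lia.
rewrite (Fh a (in_box_l a b)) (Fh b (in_box_r a b)) in ncol *.
have [r [rS ra rb r_box]] := satS a b aS bS (contra (@collinear_map h id a b) ncol).
have map_h_inj : injective (map_point h id).
  by move=> [? ?] [? ?] [/(inc_inj h_mono) -> ->].
exists (map_point h id r); split; rewrite ?(inj_eq map_h_inj) //.
  by rewrite inE -Fh // in_imfset.
by apply: in_box_map r_box => // x y; rewrite h_mono.
Qed.

Lemma satisfied_splice : satisfied T.
Proof.
have image_column a y :
    a \in S -> ~~ collinear (F a) (c, y) -> pair_satisfied T (F a) (c, y).
  move=> aS /norP[_ ya]; apply: splice_column_witness => //=; first by rewrite eq_sym.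
  by apply/andP; split; lia.
move=> p q /fsetUP[] /imfsetP[a aS ->] /fsetUP[] /imfsetP[b bS ->] ncol.
- have [same_side|other_side] := eqVneq (s <= px a) (s <= px b).
    exact: splice_same_side.
  apply: splice_column_witness => //; first by case/norP: ncol => _; rewrite eq_sym.
  have := sides a aS; have := sides b bS; move: other_side.
  by rewrite /F /map_point /piecewise /=; case: ifP; case: ifP => //= *; lia.
- exact: image_column.
- by apply/pair_satisfiedC/image_column; rewrite // collinearC.
- by rewrite /collinear eqxx in ncol.
Qed.

End Splice.

(* Columns >= s move to 0..N-s-1 and columns < s to N-s+1..N: column N-s is left free. *)
Definition gap_shift (N s : nat) : int -> int :=
  piecewise s%:Z (fun x => x + (N%:Z - s%:Z + 1)) (fun x => x - s%:Z).

Definition merge_column (c x : int) : int := if c < x then x - 1 else x.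

Lemma merge_column_homo c : {homo merge_column c : x y / x <= y}.
Proof. by move=> x y xy; rewrite /merge_column; case: ifP; case: ifP => *; lia. Qed.

Lemma merge_gap_shift_cyclic N s x : (s < N)%N -> 0 <= x < N%:Z ->
  merge_column (N%:Z - s%:Z) (gap_shift N s ((x + s%:Z) %% N%:Z)%Z) = x.
Proof.
move=> sN x_range.
have [wrap|no_wrap] := lerP N%:Z (x + s%:Z).
  rewrite -[x + _](subrK N%:Z) modzDr modz_small; last by apply/andP; split; lia.
  by rewrite /gap_shift /piecewise /merge_column; case: ifP; case: ifP => *; lia.
rewrite modz_small; last by apply/andP; split; lia.
by rewrite /gap_shift /piecewise /merge_column; case: ifP; case: ifP => *; lia.
Qed.

Definition clamp (N : nat) (x : int) : int := Num.max 0 (Num.min x (N%:Z - 1)).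

Lemma clamp_id N x : 0 <= x < N%:Z -> clamp N x = x.
Proof. by rewrite /clamp; lia. Qed.

Section Unshift.

Variables (N s : nat) (R : {fset int}) (gy : int -> int).

Definition unshift (W : {fset point}) : {fset point} :=
  map_points (merge_column (N%:Z - s%:Z)) id
    (map_points (gap_shift N s) id (map_points (clamp N) gy W)
     `|` column (N%:Z - s%:Z) R).

Lemma card_unshift W : (#|` unshift W| <= #|` W| + #|` R|)%N.
Proof.
apply: leq_trans (card_map_points _ _ _) _; apply: leq_trans (leq_card_fsetU _ _).1 _.
apply: leq_add; last exact: card_column.
exact: leq_trans (card_map_points _ _ _) (card_map_points _ _ _).
Qed.

Hypothesis sN : (s < N)%N.
Hypothesis gy_homo : {homo gy : x y / x <= y}.
Hypothesis gy_R : forall y, gy y \in R.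

Lemma satisfied_unshift W : satisfied W -> satisfied (unshift W).
Proof.
move=> satW; apply: satisfied_map; [exact: merge_column_homo | by [] |].
apply: satisfied_splice.
- by apply: satisfied_map => // x y xy; rewrite /clamp; lia.
- by move=> _ /imfsetP[p _ ->]; exact: gy_R.
- by move=> x y; rewrite lerD2r.
- by move=> x y; rewrite lerD2r.
- by move=> _ /imfsetP[p _ ->] /=; rewrite /clamp; case: ifP => *; lia.
Qed.

Lemma mem_unshift p W : 0 <= px p -> px p < N%:Z -> gy (py p) = py p ->
  shift_pt N s p \in W -> p \in unshift W.
Proof.
case: p => x y; rewrite /px /py /= => x_ge0 x_ltN gy_y shift_W.
have N_gt0 : 0 < N%:Z by rewrite ltz_nat (leq_ltn_trans (leq0n s)).
have shifted_range : 0 <= ((x + s%:Z) %% N%:Z)%Z < N%:Z.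
  by rewrite modz_ge0 ?ltz_pmod ?lt0r_neq0.
have -> : (x, y) = map_point (merge_column (N%:Z - s%:Z)) id
    (map_point (gap_shift N s) id (map_point (clamp N) gy (shift_pt N s (x, y)))).
  rewrite /map_point /shift_pt /px /py /= gy_y clamp_id //.
  by rewrite merge_gap_shift_cyclic ?x_ge0.
by rewrite !(in_imfset, inE).
Qed.

End Unshift.

Lemma is_opt_le {X : {fset point}} {k : nat} {Z : {fset point}} :
  is_opt X k -> X `<=` Z -> satisfied Z -> (k <= #|` Z| - #|` X|)%N.
Proof.
move=> [_ k_min] XZ satZ; rewrite -cardfsDS //; apply: k_min.
by rewrite fsetUDl fsetDv fsetD0 (fsetUidPr _ _ XZ).
Qed.

Lemma satisfied0 : satisfied fset0.
Proof. by move=> p q; rewrite inE. Qed.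

Theorem claim4p4 (N s : nat) (X : {fset point}) (optX optXs : nat) :
  semi_permutation X ->
  (forall p, p \in X -> (0 <= px p)%R /\ (px p < N%:Z)%R) ->
  (s < N)%N ->
  is_opt X optX ->
  is_opt (cyc_shift N s X) optXs ->
  (optX - #|` X| <= optXs)%N.
Proof.
move=> _ X_cols sN optX_spec [[Y [satW <-]] _].
have [X0 | /fset0Pn[p0 p0X]] := eqVneq X fset0.
  rewrite X0 in optX_spec *; have := is_opt_le optX_spec (fsub0set fset0) satisfied0.
  by rewrite cardfs0; lia.
pose R := [fset py p | p in X].
have /exists_monotone_retraction[gy [gy_homo gy_fix gy_R]] : R != fset0.
  by apply/fset0Pn; exists (py p0); exact: in_imfset.
pose Z := unshift N s R gy (cyc_shift N s X `|` Y).
have XZ : X `<=` Z.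
  apply/fsubsetP => p pX; have [x_ge0 x_ltN] := X_cols p pX.
  by apply: mem_unshift; rewrite ?gy_fix ?inE ?in_imfset.
have card_R : (#|` R| <= #|` X|)%N by exact: leq_imfset_card.
have card_shift : (#|` cyc_shift N s X| <= #|` X|)%N by exact: leq_imfset_card.
have satZ : satisfied Z by apply: satisfied_unshift.
have card_Z : (#|` Z| <= #|` cyc_shift N s X `|` Y| + #|` R|)%N by exact: card_unshift.
have card_W := (leq_card_fsetU (cyc_shift N s X) Y).1.
by have := is_opt_le optX_spec XZ satZ; lia.
Qed.
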